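(* Every fan in $\mathsf{c}\text{-}\mathsf{Fan}^{+-}_{\rm sc}(2)$ can be obtained from the fan $\Sigma(0,0;0,0)$, whose 2-dimensional cones are the four closed coordinate quadrants, by a finite sequence of subdivisions.
   Context: $\mathsf{c}\text{-}\mathsf{Fan}^{+-}_{\rm sc}(2)$ is the set of complete fans $\Sigma$ in $\mathbb{R}^2$ (cones strongly convex rational polyhedral) that are nonsingular (each 2-dimensional cone is generated by a $\mathbb{Z}$-basis of $\mathbb{Z}^2$), contain $\operatorname{cone}\{(1,0),(0,1)\}$, $\operatorname{cone}\{(-1,0),(0,-1)\}$ and $\operatorname{cone}\{(-1,0),(0,1)\}$, have every cone contained in a closed coordinate quadrant, and have every ray a face of exactly two 2-dimensional cones. Subdivision: for a 2-dimensional cone $\sigma=\operatorname{cone}\{u,v\}$ ($u,v$ primitive) of a nonsingular fan $\Sigma$, $D_\sigma(\Sigma)$ has rays $\Sigma_1\cup\{\mathbb{R}_{\ge0}(u+v)\}$ and 2-dimensional cones $(\Sigma_2\setminus\{\sigma\})\cup\{\operatorname{cone}\{u,u+v\},\operatorname{cone}\{v,u+v\}\}$. *)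

From HB Require Import structures.
From mathcomp Require Import all_boot all_order all_algebra.
From mathcomp Require Import finmap.
From mathcomp Require Import reals.
Set Implicit Arguments. Unset Strict Implicit. Unset Printing Implicit Defensive.
Import Order.TTheory GRing.Theory Num.Theory.
Local Open Scope fset_scope.
Local Open Scope ring_scope.

Definition Z2 := (int * int)%type.
Definition addZ2 (u v : Z2) : Z2 := (u.1 + v.1, u.2 + v.2).
Definition detZ2 (u v : Z2) : int := u.1 * v.2 - u.2 * v.1.
Definition primitiveZ2 (w : Z2) : bool := gcdz w.1 w.2 == 1.

(* A fan in R^2 whose cones are all (simplicial) cones generated by primitive
   lattice vectors, represented by its rays Sigma_1 (primitive generators) and
   its 2-dimensional cones Sigma_2 (each given by its set of primitive
   generators).  The full set of cones is {0} ∪ rays ∪ 2-cones. *)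
Record fan2 := Fan2 { rays : {fset Z2}; cones2 : {fset {fset Z2}} }.

Definition allgens (F : fan2) (S : {fset Z2}) : Prop :=
  S = fset0 \/ (exists u, u \in rays F /\ S = [fset u]) \/ S \in cones2 F.

Section Geometry.
Variable R : realType.

Definition pt (w : Z2) : R * R := (w.1%:~R, w.2%:~R).

Definition cone (S : {fset Z2}) (x : R * R) : Prop :=
  exists c : Z2 -> R, (forall w, w \in S -> 0 <= c w) /\
    x = (\sum_(w <- S) c w * (pt w).1, \sum_(w <- S) c w * (pt w).2).

Definition dot (m x : R * R) : R := m.1 * x.1 + m.2 * x.2.

Definition is_face (tau sigma : R * R -> Prop) : Prop :=
  exists m : R * R, (forall x, sigma x -> 0 <= dot m x) /\
    (forall x, tau x <-> (sigma x /\ dot m x = 0)).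

Definition in_closed_quadrant (C : R * R -> Prop) : Prop :=
  exists s1 s2 : R, (s1 = 1 \/ s1 = -1) /\ (s2 = 1 \/ s2 = -1) /\
    forall x, C x -> 0 <= s1 * x.1 /\ 0 <= s2 * x.2.

Definition nonsingular_fan (F : fan2) : Prop :=
  (forall u, u \in rays F -> primitiveZ2 u) /\
  (forall sigma, sigma \in cones2 F -> exists u v,
      [/\ u \in rays F, v \in rays F, sigma = [fset u; v] &
          (detZ2 u v = 1 \/ detZ2 u v = -1)]) /\
  (forall S T, allgens F S -> allgens F T ->
      is_face (fun x => cone S x /\ cone T x) (cone S) /\
      is_face (fun x => cone S x /\ cone T x) (cone T)).

Definition complete_fan (F : fan2) : Prop :=
  forall x : R * R, exists S, allgens F S /\ cone S x.

Definition in_cFan_pm_sc (F : fan2) : Prop :=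
  nonsingular_fan F /\ complete_fan F /\
  [fset ((1, 0) : Z2); (0, 1)] \in cones2 F /\
  [fset ((-1, 0) : Z2); (0, -1)] \in cones2 F /\
  [fset ((-1, 0) : Z2); (0, 1)] \in cones2 F /\
  (forall S, allgens F S -> in_closed_quadrant (cone S)) /\
  (forall u, u \in rays F -> exists s1 s2,
     s1 \in cones2 F /\ s2 \in cones2 F /\ s1 != s2 /\
     is_face (cone [fset u]) (cone s1) /\
     is_face (cone [fset u]) (cone s2) /\
     forall s, s \in cones2 F -> is_face (cone [fset u]) (cone s) ->
       s = s1 \/ s = s2).

End Geometry.

Definition subdiv (F : fan2) (u v : Z2) : fan2 :=
  Fan2 (addZ2 u v |` rays F)
       ((cones2 F `\ [fset u; v]) `|` [fset [fset u; addZ2 u v]; [fset v; addZ2 u v]]).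

Definition Sigma0 : fan2 :=
  Fan2 [fset ((1, 0) : Z2); (0, 1); (-1, 0); (0, -1)]
       [fset [fset ((1, 0) : Z2); (0, 1)]; [fset ((-1, 0) : Z2); (0, 1)];
             [fset ((-1, 0) : Z2); (0, -1)]; [fset ((1, 0) : Z2); (0, -1)]].

Inductive obtained_by_subdivisions (F0 : fan2) : fan2 -> Prop :=
| obs_refl : obtained_by_subdivisions F0 F0
| obs_step F u v : obtained_by_subdivisions F0 F -> u != v ->
    [fset u; v] \in cones2 F -> obtained_by_subdivisions F0 (subdiv F u v).

From HB Require Import structures.
From mathcomp Require Import all_boot all_order all_algebra finmap reals.
From mathcomp Require Import ring lra zify.
Set Implicit Arguments. Unset Strict Implicit. Unset Printing Implicit Defensive.
Import Order.TTheory GRing.Theory Num.Theory.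
Local Open Scope fset_scope.
Local Open Scope ring_scope.

(* Such a fan agrees with Sigma(0,0;0,0) in the first three quadrants, and the
   geometric axioms reduce to a combinatorial description of its cones in the
   fourth one: they are unimodular, every ray lies on exactly two of them, and a
   ray w of the open fourth quadrant has neighbours a, b with
   det(a, w) = det(w, b) = -1 (two cones sharing a ray lie on opposite sides of
   it, since nested cones of a nonsingular fan coincide).  If w has maximal
   weight w.1 - w.2, comparing weights in the Cramer identity
   det(a, b) w = -(a + b) forces a + b = w.  Removing w and merging its two
   cones into cone{a, b} yields a fan with the same description and one ray
   less, of which the original fan is the subdivision at cone{a, b}; induction
   on the number of rays ends at Sigma(0,0;0,0). *)

Lemma mem_neq (K : choiceType) (x : K) (s t : {fset K}) : x \in s -> x \notin t -> s != t.
Proof. by move=> xs; apply: contra => /eqP <-. Qed.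

Lemma fset2_eq (K : choiceType) (p q u v : K) : p != q ->
  p \in [fset u; v] -> q \in [fset u; v] -> [fset p; q] = [fset u; v].
Proof.
move=> pq; rewrite !in_fset2 => /orP[] /eqP Ep /orP[] /eqP Eq; rewrite Ep Eq in pq *;
  by rewrite ?eqxx in pq * => //; rewrite fsetUC.
Qed.

Definition unimodular (p q : Z2) : Prop := detZ2 p q = 1 \/ detZ2 p q = -1.

Lemma detZ2C (p q : Z2) : detZ2 q p = - detZ2 p q.
Proof. by rewrite /detZ2; ring. Qed.

Lemma unimodularC (p q : Z2) : unimodular p q -> unimodular q p.
Proof. by rewrite /unimodular [detZ2 q p]detZ2C; case=> ->; [right | left; rewrite opprK]. Qed.

Lemma unimodular_sqr (p q : Z2) : unimodular p q -> detZ2 p q * detZ2 p q = 1.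
Proof. by case=> ->; rewrite ?mulrNN mulr1. Qed.

Lemma unimodular_neq (p q : Z2) : unimodular p q -> p != q.
Proof.
move=> upq; apply: contraPneq (unimodular_sqr upq) => ->.
by rewrite /detZ2 (mulrC q.1) subrr mul0r.
Qed.

Lemma detZ2_neq_l (x y z : Z2) : detZ2 x z != detZ2 y z -> x != y.
Proof. by apply: contraNneq => ->. Qed.

Lemma detZ2_neq_r (x y z : Z2) : detZ2 z x != detZ2 z y -> x != y.
Proof. by apply: contraNneq => ->. Qed.

Lemma Z2_eq (u v : Z2) : u.1 = v.1 -> u.2 = v.2 -> u = v.
Proof. by case: u v => [? ?] [? ?] /= -> ->. Qed.

Lemma primitive_scaled_eq (u p : Z2) (k : int) : primitiveZ2 u -> 0 <= k ->
  u.1 = k * p.1 -> u.2 = k * p.2 -> u = p.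
Proof.
move=> /eqP gcd_u k_ge0 u1 u2.
have : (k %| gcdz u.1 u.2)%Z by rewrite dvdz_gcd u1 u2 !dvdz_mulr.
rewrite gcd_u dvdz1 => /eqP k1.
have k_eq1 : k = 1 by move: k_ge0 k1; case: (k) => // n _ /= ->.
by apply: Z2_eq; rewrite ?u1 ?u2 k_eq1 mul1r.
Qed.

Definition closedQ4 (u : Z2) := (0 <= u.1) && (u.2 <= 0).
Definition openQ4 (u : Z2) := (0 < u.1) && (u.2 < 0).
Definition weight (u : Z2) := u.1 - u.2.

Lemma openQ4_closedQ4 (u : Z2) : openQ4 u -> closedQ4 u.
Proof. by case/andP=> u1 u2; rewrite /closedQ4 ltW // ltW. Qed.

Lemma addZ2C (u v : Z2) : addZ2 u v = addZ2 v u.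
Proof. by rewrite /addZ2 addrC [u.2 + _]addrC. Qed.

Lemma mulz_pm1 (x y : int) : x * y = 1 \/ x * y = -1 -> x = 1 \/ x = -1.
Proof.
move=> h; suff : x \is a GRing.unit by lia.
by apply/unitrPr; case: h => h; [exists y | exists (- y); rewrite mulrN h opprK].
Qed.

Lemma closedQ4_left_axis (a w : Z2) : closedQ4 a -> closedQ4 w -> ~~ openQ4 a ->
  detZ2 a w = -1 -> a = (1, 0).
Proof.
case: a w => a1 a2 [w1 w2]; rewrite /closedQ4 /openQ4 /detZ2 /= => qa qw oa d.
have [a10|a20] : a1 = 0 \/ a2 = 0 by lia.
  by move: d; rewrite a10; nia.
rewrite a20 in d *; suff -> : a1 = 1 by [].
have := @mulz_pm1 a1 w2; lia.
Qed.

Lemma closedQ4_right_axis (b w : Z2) : closedQ4 b -> closedQ4 w -> ~~ openQ4 b ->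
  detZ2 w b = -1 -> b = (0, -1).
Proof.
case: b w => b1 b2 [w1 w2]; rewrite /closedQ4 /openQ4 /detZ2 /= => qb qw ob d.
have [b10|b20] : b1 = 0 \/ b2 = 0 by lia.
  rewrite b10 in d *; suff -> : b2 = -1 by [].
  have := @mulz_pm1 b2 w1; lia.
by move: d; rewrite b20; nia.
Qed.

(* Cramer: det(a, b) w = det(w, b) a + det(a, w) b = -(a + b).  Comparing
   weights gives det(a, b) = -1 or -2, and -2 forces weight a = weight w,
   which is incompatible with det(a, w) = -1 since weight w >= 2. *)
Lemma neighbours_sum (a b w : Z2) : closedQ4 a -> closedQ4 b -> openQ4 w ->
  detZ2 a w = -1 -> detZ2 w b = -1 -> weight a <= weight w -> weight b <= weight w ->
  addZ2 a b = w.
Proof.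
case: a b w => a1 a2 [b1 b2] [w1 w2]; rewrite /closedQ4 /openQ4 /weight /detZ2 /addZ2 /=.
move=> qa qb ow da db la lb.
set c := a1 * b2 - a2 * b1.
have cramer1 : c * w1 = - (a1 + b1) by rewrite /c; nia.
have cramer2 : c * w2 = - (a2 + b2) by rewrite /c; nia.
have [c1|c2] : c = -1 \/ c = -2 by nia.
  by congr (_, _); lia.
exfalso.
have : (w1 - w2) * (w1 - a1) = -1 by nia.
move=> h; have := mulz_pm1 (or_intror h); lia.
Qed.

Definition q1 : {fset Z2} := [fset ((1, 0) : Z2); (0, 1)].
Definition q2 : {fset Z2} := [fset ((-1, 0) : Z2); (0, 1)].
Definition q3 : {fset Z2} := [fset ((-1, 0) : Z2); (0, -1)].
Definition q4 : {fset Z2} := [fset ((1, 0) : Z2); (0, -1)].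

Definition Q4_cone (s : {fset Z2}) : Prop :=
  exists u v, [/\ s = [fset u; v], closedQ4 u, closedQ4 v & detZ2 u v = -1].

Definition two_cones (F : fan2) (u : Z2) : Prop :=
  exists s1 s2, [/\ s1 \in cones2 F, s2 \in cones2 F, s1 != s2 &
    forall s, s \in cones2 F -> (u \in s) = (s == s1) || (s == s2)].

(* What the induction keeps of c-Fan^{+-}_sc(2) once the geometry is forgotten. *)
Record q4_fan (F : fan2) : Prop := Q4Fan {
  q1_cone : q1 \in cones2 F;
  q2_cone : q2 \in cones2 F;
  q3_cone : q3 \in cones2 F;
  cone_ray : forall s x, s \in cones2 F -> x \in s -> x \in rays F;
  cone_cases : forall s, s \in cones2 F -> [\/ s = q1, s = q2, s = q3 | Q4_cone s];
  ray_two_cones : forall u, u \in rays F -> two_cones F u;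
  openQ4_neighbours : forall w, w \in rays F -> openQ4 w -> exists a b,
    [/\ [fset a; w] \in cones2 F, [fset b; w] \in cones2 F, detZ2 a w = -1 & detZ2 w b = -1]
}.

Section Cones.
Variable R : realType.
Local Notation pt := (pt R).
Local Notation cone := (@cone R).

Definition det2 (x y : R * R) : R := x.1 * y.2 - x.2 * y.1.

Lemma det2_pt (p q : Z2) : det2 (pt p) (pt q) = (detZ2 p q)%:~R.
Proof. by rewrite /det2 /detZ2 intrB !intrM. Qed.

Lemma unimodular_det2 (p q : Z2) : unimodular p q -> det2 (pt p) (pt q) != 0.
Proof. by rewrite det2_pt intr_eq0; case=> ->; rewrite ?oppr_eq0 oner_eq0. Qed.

Lemma cone1P (u : Z2) (x : R * R) :
  cone [fset u] x <-> exists2 a : R, 0 <= a & x = (a * (pt u).1, a * (pt u).2).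
Proof.
split=> [[c [c_ge0 ->]] | [a a_ge0 ->]]; last by exists (fun=> a); rewrite !big_seq_fset1.
by exists (c u); rewrite ?c_ge0 ?fset11 // !big_seq_fset1.
Qed.

Lemma cone2P (p q : Z2) (x : R * R) : p != q ->
  cone [fset p; q] x <-> exists a b : R, [/\ 0 <= a, 0 <= b &
    x = (a * (pt p).1 + b * (pt q).1, a * (pt p).2 + b * (pt q).2)].
Proof.
move=> pq; have pNq : p \notin [fset q] by rewrite inE.
split=> [[c [c_ge0 ->]] | [a [b [a_ge0 b_ge0 ->]]]].
  exists (c p), (c q); rewrite !c_ge0 ?fset21 ?fset22 //.
  by rewrite !big_fsetU1 // !big_seq_fset1.
exists (fun w => if w == p then a else b); split; first by move=> w _; case: ifP.
by rewrite !big_fsetU1 // !big_seq_fset1 eqxx eq_sym (negbTE pq).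
Qed.

Lemma cone_subset (S T : {fset Z2}) (x : R * R) : S `<=` T -> cone S x -> cone T x.
Proof.
move=> ST [c [c_ge0 ->]]; exists (fun w => if w \in S then c w else 0); split.
  by move=> w _; case: ifP => // /c_ge0.
by congr (_, _); (rewrite -(big_fset_incl _ ST); last by move=> w _ /negbTE ->; rewrite mul0r);
  apply: eq_big_seq => w ->.
Qed.

Lemma cone_gen (S : {fset Z2}) (u : Z2) : u \in S -> cone S (pt u).
Proof.
by rewrite -fsub1set => uS; apply: cone_subset uS _; apply/cone1P; exists 1; rewrite ?mul1r.
Qed.

Lemma is_face_ext (X Y S T : R * R -> Prop) : is_face X S ->
  (forall x, X x <-> Y x) -> (forall x, S x <-> T x) -> is_face Y T.
Proof.
move=> [m [m_ge0 XE]] XY ST; exists m; split=> [x /ST | x]; first exact: m_ge0.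
by rewrite -XY -ST; exact: XE.
Qed.

(* The linear form cutting out the face vanishes on two independent vectors. *)
Lemma face_full (X S : R * R -> Prop) (x y : R * R) :
  is_face X S -> X x -> X y -> det2 x y != 0 -> forall z, S z -> X z.
Proof.
move=> [m [_ XE]] /XE [_ mx] /XE [_ my] dxy z Sz; apply/XE; split=> //.
have m1 : m.1 * det2 x y = 0.
  transitivity (y.2 * dot m x - x.2 * dot m y); first by rewrite /dot /det2; ring.
  by rewrite mx my; ring.
have m2 : m.2 * det2 x y = 0.
  transitivity (x.1 * dot m y - y.1 * dot m x); first by rewrite /dot /det2; ring.
  by rewrite mx my; ring.
move/eqP: m1 m2; rewrite mulf_eq0 (negbTE dxy) orbF => /eqP m1 /eqP.
by rewrite mulf_eq0 (negbTE dxy) orbF => /eqP m2; rewrite /dot m1 m2 !mul0r addr0.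
Qed.

Lemma unimodular_scaled_eq (p q u : Z2) (a : R) : unimodular p q -> primitiveZ2 u ->
  0 <= a -> pt u = (a * (pt p).1, a * (pt p).2) -> u = p.
Proof.
move=> upq pu a_ge0 Eu; set k := detZ2 u q * detZ2 p q.
have a_k : a = k%:~R.
  transitivity (a * (detZ2 p q * detZ2 p q)%:~R); first by rewrite unimodular_sqr // mulr1.
  by rewrite /k !intrM -!det2_pt Eu /det2 /=; ring.
move: Eu; rewrite a_k /pt => -[u1 u2].
apply: (primitive_scaled_eq pu (k := k)); first by rewrite -(ler0z R) -a_k.
  by apply/eqP; rewrite -(eqr_int R) intrM u1.
by apply/eqP; rewrite -(eqr_int R) intrM u2.
Qed.

Lemma face_ray_mem (p q u : Z2) : unimodular p q -> primitiveZ2 u ->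
  is_face (cone [fset u]) (cone [fset p; q]) -> u \in [fset p; q].
Proof.
move=> upq pu [m [m_ge0 faceE]].
have [/(cone2P _ (unimodular_neq upq)) [a [b [a_ge0 b_ge0 Eu]]] mu] :=
  (faceE (pt u)).1 (cone_gen (fset11 u)).
have [b0 | b_neq0] := eqVneq b 0.
  by rewrite (unimodular_scaled_eq upq pu a_ge0) ?fset21 // Eu b0 !mul0r !addr0.
have [a0 | a_neq0] := eqVneq a 0.
  by rewrite (unimodular_scaled_eq (unimodularC upq) pu b_ge0) ?fset22 // Eu a0 !mul0r !add0r.
have mp_ge0 := m_ge0 _ (cone_gen (fset21 p q)); have mq_ge0 := m_ge0 _ (cone_gen (fset22 p q)).
have /eqP : a * dot m (pt p) + b * dot m (pt q) = 0 by rewrite -mu Eu /dot /=; ring.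
rewrite paddr_eq0 ?mulr_ge0 // !mulf_eq0 (negbTE a_neq0) (negbTE b_neq0) /=.
move=> /andP[/eqP mp /eqP mq].
have /cone1P [l _ El] := (faceE (pt p)).2 (conj (cone_gen (fset21 p q)) mp).
have /cone1P [l' _ El'] := (faceE (pt q)).2 (conj (cone_gen (fset22 p q)) mq).
have : det2 (pt p) (pt q) = 0 by rewrite El El' /det2 /=; ring.
by move/eqP; rewrite (negbTE (unimodular_det2 upq)).
Qed.

Lemma allgens_ray (F : fan2) (u : Z2) : u \in rays F -> allgens F [fset u].
Proof. by move=> uR; right; left; exists u. Qed.

Lemma allgens_cone (F : fan2) (s : {fset Z2}) : s \in cones2 F -> allgens F s.
Proof. by move=> sC; right; right. Qed.

Lemma ray_face_of_cone (F : fan2) (u : Z2) (s : {fset Z2}) : nonsingular_fan R F ->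
  u \in rays F -> s \in cones2 F -> u \in s -> is_face (cone [fset u]) (cone s).
Proof.
move=> [_ [_ faces]] uR sC us.
have [_ face_s] := faces _ _ (allgens_ray uR) (allgens_cone sC).
apply: (is_face_ext face_s) => // x; split=> [[] // | ux]; split=> //.
by apply: cone_subset ux; rewrite fsub1set.
Qed.

(* The smaller cone is a face of the bigger one containing two independent
   vectors, and each generator of the smaller one spans a face of the bigger one. *)
Lemma fan_cone_subset_eq (F : fan2) (S T : {fset Z2}) : nonsingular_fan R F ->
  S \in cones2 F -> T \in cones2 F -> (forall x, cone S x -> cone T x) -> S = T.
Proof.
move=> NS SC TC ST; have [primitive_rays [cones_unimodular faces]] := NS.
have [_ faceT] := faces _ _ (allgens_cone SC) (allgens_cone TC).
have [p [q [pR qR ES upq]]] := cones_unimodular S SC.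
have [u [v [_ _ ET uuv]]] := cones_unimodular T TC.
have pS : p \in S by rewrite ES fset21.
have qS : q \in S by rewrite ES fset22.
have in_ST r : r \in S -> cone S (pt r) /\ cone T (pt r).
  by move=> rS; split; [|apply: ST]; exact: cone_gen.
have TS x : cone T x -> cone S x.
  by move=> Tx; have [] := face_full faceT (in_ST p pS) (in_ST q qS) (unimodular_det2 upq) Tx.
have in_T r : r \in S -> r \in rays F -> r \in [fset u; v].
  move=> rS rR; apply: face_ray_mem uuv (primitive_rays r rR) _; rewrite -ET.
  by apply: (is_face_ext (ray_face_of_cone NS rR SC rS)) => // x; split; [exact: ST | exact: TS].
by rewrite ES ET; apply: fset2_eq (unimodular_neq upq) (in_T p pS pR) (in_T q qS qR).
Qed.

Lemma quadrant_cone (e1 e2 : int) (x : R * R) : e1 * e1 = 1 -> e2 * e2 = 1 ->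
  0 <= e1%:~R * x.1 -> 0 <= e2%:~R * x.2 -> cone [fset ((e1, 0) : Z2); (0, e2)] x.
Proof.
move=> e11 e22 x1 x2; apply/cone2P.
  by apply/eqP => -[e1_0 _]; move: e11; rewrite e1_0 mul0r.
exists (e1%:~R * x.1), (e2%:~R * x.2); split=> //.
rewrite /pt /= !mulr0 addr0 add0r !(mulrAC _ _ (_%:~R)) -!intrM e11 e22 !mul1r.
by case: x {x1 x2}.
Qed.

Lemma quadrant_cone_eq (F : fan2) (s : {fset Z2}) (e1 e2 : int) : nonsingular_fan R F ->
  s \in cones2 F -> [fset ((e1, 0) : Z2); (0, e2)] \in cones2 F ->
  e1 * e1 = 1 -> e2 * e2 = 1 ->
  (forall x, cone s x -> 0 <= e1%:~R * x.1 /\ 0 <= e2%:~R * x.2) ->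
  s = [fset ((e1, 0) : Z2); (0, e2)].
Proof.
move=> NS sC qC e11 e22 s_sgn; apply: fan_cone_subset_eq NS sC qC _ => x /s_sgn [].
exact: quadrant_cone.
Qed.

Lemma parallel_shift (a b w : Z2) : w.1 != 0 -> detZ2 a w = detZ2 b w ->
  exists t : R, pt a = ((pt b).1 + t * (pt w).1, (pt b).2 + t * (pt w).2).
Proof.
move=> w1 /(congr1 (fun z : int => z%:~R : R)); rewrite /= -!det2_pt /det2 /pt /= => dab.
have w1R : w.1%:~R != 0 :> R by rewrite intr_eq0.
exists ((a.1%:~R - b.1%:~R) / w.1%:~R); congr (_, _); first by field.
apply: (mulIf w1R); rewrite mulrDl mulrAC divfK //; lra.
Qed.

Lemma cone_shift_subset (a b w : Z2) (t : R) (x : R * R) : a != w -> b != w -> 0 <= t ->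
  pt a = ((pt b).1 + t * (pt w).1, (pt b).2 + t * (pt w).2) ->
  cone [fset a; w] x -> cone [fset b; w] x.
Proof.
move=> aw bw t_ge0 Ea /(cone2P _ aw) [al [be [al_ge0 be_ge0 ->]]]; apply/(cone2P _ bw).
exists al, (al * t + be); rewrite addr_ge0 ?mulr_ge0 // Ea /=; split=> //.
by congr (_, _); ring.
Qed.

(* Otherwise a - b is a multiple of w, and one of the two cones contains the other. *)
Lemma shared_ray_det_neq (F : fan2) (a b w : Z2) : nonsingular_fan R F ->
  [fset a; w] \in cones2 F -> [fset b; w] \in cones2 F -> [fset a; w] != [fset b; w] ->
  unimodular a w -> unimodular b w -> w.1 != 0 -> detZ2 a w != detZ2 b w.
Proof.
move=> NS aC bC neq uaw ubw w1; apply/eqP => /(parallel_shift w1) [t Ea].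
have aw := unimodular_neq uaw; have bw := unimodular_neq ubw.
move/eqP: neq; apply; have [t_ge0 | t_lt0] := lerP 0 t.
  by apply: fan_cone_subset_eq NS aC bC _ => x; apply: cone_shift_subset Ea.
have Eb : pt b = ((pt a).1 + (- t) * (pt w).1, (pt a).2 + (- t) * (pt w).2).
  by rewrite Ea /=; congr (_, _); ring.
symmetry; apply: fan_cone_subset_eq NS bC aC _ => x.
by apply: cone_shift_subset Eb; rewrite // oppr_ge0 ltW.
Qed.

Lemma cone_at_ray (F : fan2) (s : {fset Z2}) (w : Z2) : nonsingular_fan R F ->
  s \in cones2 F -> w \in s -> exists2 x, s = [fset x; w] & unimodular x w.
Proof.
move=> [_ [cones_unimodular _]] sC; have [p [q [_ _ -> upq]]] := cones_unimodular s sC.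
rewrite in_fset2 => /orP[] /eqP ->; last by exists p.
by exists q; [rewrite fsetUC | exact: unimodularC].
Qed.

Lemma cFan_two_cones (F : fan2) (u : Z2) : in_cFan_pm_sc R F -> u \in rays F ->
  two_cones F u.
Proof.
move=> [NS [_ [_ [_ [_ [_ ray_faces]]]]]] uR.
have [s1 [s2 [s1C [s2C [s12 [f1 [f2 only12]]]]]]] := ray_faces u uR.
have face_mem s : s \in cones2 F -> is_face (cone [fset u]) (cone s) -> u \in s.
  move=> sC; have [p [q [_ _ -> upq]]] := NS.2.1 s sC.
  exact: face_ray_mem upq (NS.1 u uR).
exists s1, s2; split=> // s sC; apply/idP/idP => [us | /orP[] /eqP ->]; last 2 first.
- exact: face_mem.
- exact: face_mem.
by case: (only12 s sC (ray_face_of_cone NS uR sC us)) => ->; rewrite eqxx ?orbT.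
Qed.

Lemma cFan_cone_cases (F : fan2) (s : {fset Z2}) : in_cFan_pm_sc R F -> s \in cones2 F ->
  [\/ s = q1, s = q2, s = q3 | Q4_cone s].
Proof.
move=> [NS [_ [q1C [q3C [q2C [quadrant _]]]]]] sC.
have [s1 [s2 [s1E [s2E s_sgn]]]] := quadrant s (allgens_cone sC).
have quadrant_eq := quadrant_cone_eq NS sC.
case: s1E s2E s_sgn => -> [] -> s_sgn.
- by apply: Or41; apply: quadrant_eq q1C _ _ s_sgn.
- apply: Or44; have [u [v [_ _ Es uuv]]] := NS.2.1 s sC.
  have Q4_gen x : x \in s -> closedQ4 x.
    move=> xs; have [] := s_sgn _ (cone_gen xs).
    by rewrite mul1r mulN1r oppr_ge0 ler0z lerz0 /closedQ4 /= => -> ->.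
  have [Qu Qv] : closedQ4 u /\ closedQ4 v by rewrite !Q4_gen ?Es ?fset21 ?fset22.
  case: uuv => duv; last by exists u, v.
  by exists v, u; rewrite Es fsetUC detZ2C duv.
- by apply: Or42; apply: quadrant_eq q2C _ _ s_sgn.
- by apply: Or43; apply: quadrant_eq q3C _ _ s_sgn.
Qed.

Lemma cFan_openQ4_neighbours (F : fan2) (w : Z2) : in_cFan_pm_sc R F ->
  w \in rays F -> openQ4 w -> exists a b,
  [/\ [fset a; w] \in cones2 F, [fset b; w] \in cones2 F, detZ2 a w = -1 & detZ2 w b = -1].
Proof.
move=> HF wR /andP[w1_gt0 _]; have NS := HF.1.
have [s1 [s2 [s1C s2C s12 s_w]]] := cFan_two_cones HF wR.
have [ws1 ws2] : w \in s1 /\ w \in s2 by rewrite !s_w // !eqxx orbT.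
have [a E1 uaw] := cone_at_ray NS s1C ws1; have [b E2 ubw] := cone_at_ray NS s2C ws2.
rewrite E1 E2 in s1C s2C s12.
have w1_neq0 : w.1 != 0 by rewrite gt_eqF.
have := shared_ray_det_neq NS s1C s2C s12 uaw ubw w1_neq0.
case: uaw => daw; case: ubw => dbw; rewrite daw dbw ?eqxx // => _.
  by exists b, a; split; rewrite // detZ2C daw.
by exists a, b; split; rewrite // detZ2C dbw.
Qed.

Lemma cFan_q4_fan (F : fan2) : in_cFan_pm_sc R F -> q4_fan F.
Proof.
move=> HF; have [NS [_ [q1C [q3C [q2C _]]]]] := HF; split=> //.
- move=> s x sC; have [u [v [uR vR -> _]]] := NS.2.1 s sC.
  by rewrite in_fset2 => /orP[] /eqP ->.
- by move=> s; apply: cFan_cone_cases.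
- by move=> u; apply: cFan_two_cones.
- by move=> w; apply: cFan_openQ4_neighbours.
Qed.

End Cones.

Lemma openQ4_notin_q (w : Z2) : openQ4 w -> [/\ w \notin q1, w \notin q2 & w \notin q3].
Proof.
case: w => w1 w2 /andP[/= w1_gt0 w2_lt0]; rewrite !in_fset2 !xpair_eqE /=.
by split; apply/negP => /orP[] /andP[/eqP e1 /eqP e2]; lia.
Qed.

Lemma other_cone (F : fan2) (u : Z2) (t : {fset Z2}) : two_cones F u ->
  t \in cones2 F -> u \in t -> exists t', [/\ t' \in cones2 F, t' != t &
    forall s, s \in cones2 F -> (u \in s) = (s == t) || (s == t')].
Proof.
move=> [s1 [s2 [s1C s2C s12 u_in]]] tC; rewrite u_in // => /orP[] /eqP ->.
  by exists s2; rewrite eq_sym.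
by exists s1; split=> // s sC; rewrite orbC u_in.
Qed.

Lemma two_cones_no_third (F : fan2) (u : Z2) (s t r : {fset Z2}) : two_cones F u ->
  s \in cones2 F -> t \in cones2 F -> r \in cones2 F -> u \in s -> u \in t -> u \in r ->
  s != t -> s != r -> t != r -> False.
Proof.
move=> Hu sC tC rC us ut ur st sr tr; have [t' [_ _ u_in]] := other_cone Hu sC us.
move: ut ur; rewrite !u_in // [t == s]eq_sym [r == s]eq_sym (negbTE st) (negbTE sr) /=.
by move=> /eqP Et /eqP Er; rewrite Et Er eqxx in tr.
Qed.

Lemma q4_fan_closedQ4 (F : fan2) (s : {fset Z2}) (w x : Z2) : q4_fan F ->
  s \in cones2 F -> openQ4 w -> w \in s -> x \in s -> closedQ4 x.
Proof.
move=> HF sC /openQ4_notin_q[w_q1 w_q2 w_q3] ws.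
case: (cone_cases HF sC) => [Es | Es | Es | [u [v [-> Qu Qv _]]]]; rewrite ?Es in ws.
- by rewrite ws in w_q1.
- by rewrite ws in w_q2.
- by rewrite ws in w_q3.
by rewrite in_fset2 => /orP[] /eqP ->.
Qed.

Definition blowdown (F : fan2) (a b : Z2) : fan2 :=
  Fan2 (rays F `\ addZ2 a b)
       ((cones2 F `\` [fset [fset a; addZ2 a b]; [fset b; addZ2 a b]]) `|` [fset [fset a; b]]).

Lemma blowdownC (F : fan2) (a b : Z2) : blowdown F a b = blowdown F b a.
Proof.
by rewrite /blowdown addZ2C [[fset [fset a; _]; _]]fsetUC [[fset a; b]]fsetUC.
Qed.

Lemma in_blowdown (F : fan2) (a b : Z2) (s : {fset Z2}) :
  (s \in cones2 (blowdown F a b)) = (s == [fset a; b]) ||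
    [&& s != [fset a; addZ2 a b], s != [fset b; addZ2 a b] & s \in cones2 F].
Proof. by rewrite /= in_fsetU in_fsetD in_fset2 in_fset1 negb_or orbC andbA. Qed.

Lemma subdiv_blowdown (F : fan2) (a b : Z2) : addZ2 a b \in rays F ->
  [fset a; addZ2 a b] \in cones2 F -> [fset b; addZ2 a b] \in cones2 F ->
  [fset a; b] \notin cones2 F -> subdiv (blowdown F a b) a b = F.
Proof.
case: F => rs cs /= wR A_cone B_cone AB_cone; rewrite /subdiv [rays _]/= fsetD1K //.
congr Fan2.
apply/fsetP => s; rewrite in_fsetU in_fsetD in_fset1 in_blowdown in_fset2.
have [-> | sA] := eqVneq s [fset a; addZ2 a b]; first by rewrite A_cone !orbT.
have [-> | sB] := eqVneq s [fset b; addZ2 a b]; first by rewrite B_cone !orbT.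
by have [-> | sAB] := eqVneq s [fset a; b]; rewrite ?(negbTE AB_cone) //= orbF.
Qed.

Lemma blowdown_two_cones_end (F : fan2) (a b : Z2) : two_cones F a ->
  [fset a; addZ2 a b] \in cones2 F -> a \notin [fset b; addZ2 a b] ->
  [fset a; b] \notin cones2 F -> two_cones (blowdown F a b) a.
Proof.
move=> Ha A_cone aB AB_cone; have [t [tC tA a_in]] := other_cone Ha A_cone (fset21 _ _).
have tB : t != [fset b; addZ2 a b] by apply: mem_neq aB; rewrite a_in // eqxx orbT.
exists [fset a; b], t; split.
- by rewrite in_blowdown eqxx.
- by rewrite in_blowdown tA tB tC orbT.
- by apply: contraNneq AB_cone => ->.
move=> s; rewrite in_blowdown => /orP[/eqP -> | /and3P[sA sB sC]]; first by rewrite fset21 eqxx.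
rewrite a_in // (negbTE sA) /=; have [Es | //] := eqVneq s [fset a; b].
by rewrite -Es sC in AB_cone.
Qed.

Lemma blowdown_two_cones_other (F : fan2) (a b u : Z2) : two_cones F u ->
  u \notin [fset a; addZ2 a b] -> u \notin [fset b; addZ2 a b] -> u \notin [fset a; b] ->
  [fset a; b] \notin cones2 F -> two_cones (blowdown F a b) u.
Proof.
move=> [s1 [s2 [s1C s2C s12 u_in]]] uA uB uAB AB_cone.
have old s : s \in cones2 F -> u \in s -> s \in cones2 (blowdown F a b).
  by move=> sC us; rewrite in_blowdown sC (mem_neq us uA) (mem_neq us uB) orbT.
have us1 : u \in s1 by rewrite u_in ?eqxx.
have us2 : u \in s2 by rewrite u_in ?eqxx ?orbT.
exists s1, s2; split; [exact: old | exact: old | done |].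
move=> s; rewrite in_blowdown => /orP[/eqP -> | /and3P[_ _ sC]]; last exact: u_in.
by rewrite (negbTE uAB); apply/esym/norP; split; apply: contraNneq AB_cone => ->.
Qed.

Section Blowdown.
Variables (F : fan2) (a b : Z2).
Hypothesis HF : q4_fan F.
Hypothesis w_open : openQ4 (addZ2 a b).
Hypothesis A_cone : [fset a; addZ2 a b] \in cones2 F.
Hypothesis B_cone : [fset b; addZ2 a b] \in cones2 F.
Hypothesis det_ab : detZ2 a b = -1.

Local Notation w := (addZ2 a b).
Local Notation A := [fset a; addZ2 a b].
Local Notation B := [fset b; addZ2 a b].
Local Notation AB := [fset a; b].

Let det_aw : detZ2 a w = -1. Proof. by rewrite -det_ab /detZ2 /=; ring. Qed.
Let det_wb : detZ2 w b = -1. Proof. by rewrite -det_ab /detZ2 /=; ring. Qed.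
Let det_wa : detZ2 w a = 1. Proof. by rewrite detZ2C det_aw opprK. Qed.
Let det_bw : detZ2 b w = 1. Proof. by rewrite detZ2C det_wb opprK. Qed.
Let det_ba : detZ2 b a = 1. Proof. by rewrite detZ2C det_ab opprK. Qed.

Let a_neq_w : a != w. Proof. by apply: unimodular_neq; right. Qed.
Let b_neq_w : b != w. Proof. by apply: unimodular_neq; left. Qed.
Let a_neq_b : a != b. Proof. by apply: unimodular_neq; right. Qed.

Let a_notin_B : a \notin B. Proof. by rewrite in_fset2 negb_or a_neq_b a_neq_w. Qed.
Let b_notin_A : b \notin A. Proof. by rewrite in_fset2 negb_or eq_sym a_neq_b b_neq_w. Qed.
Let w_notin_AB : w \notin AB.
Proof. by rewrite in_fset2 negb_or ![w == _]eq_sym a_neq_w b_neq_w. Qed.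

Let A_neq_B : A != B. Proof. by apply: mem_neq a_notin_B; rewrite fset21. Qed.

Let a_ray : a \in rays F. Proof. by apply: (cone_ray HF A_cone); rewrite fset21. Qed.
Let b_ray : b \in rays F. Proof. by apply: (cone_ray HF B_cone); rewrite fset21. Qed.
Let w_ray : w \in rays F. Proof. by apply: (cone_ray HF A_cone); rewrite fset22. Qed.

Let w_cones s : s \in cones2 F -> (w \in s) = (s == A) || (s == B).
Proof.
have [t [_ _ w_in]] := other_cone (ray_two_cones HF w_ray) A_cone (fset22 a w).
have /eqP Bt : B == t by move: (fset22 b w); rewrite w_in // [B == A]eq_sym (negbTE A_neq_B).
by rewrite Bt; exact: w_in.
Qed.

Let a_Q4 : closedQ4 a.
Proof. exact: q4_fan_closedQ4 HF A_cone w_open (fset22 _ _) (fset21 _ _). Qed.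
Let b_Q4 : closedQ4 b.
Proof. exact: q4_fan_closedQ4 HF B_cone w_open (fset22 _ _) (fset21 _ _). Qed.

(* Otherwise a lies on three cones: A, AB, and q1 if a = (1, 0) or else its
   neighbouring cone on the other side. *)
Lemma blowdown_AB_notin : AB \notin cones2 F.
Proof.
apply/negP => AB_cone.
have A_neq_AB : A != AB by apply: mem_neq w_notin_AB; rewrite fset22.
suff [s [sC a_s sA sAB]] : exists s, [/\ s \in cones2 F, a \in s, s != A & s != AB].
  by apply: (two_cones_no_third (ray_two_cones HF a_ray) sC A_cone AB_cone a_s);
    rewrite ?fset21.
have [a_open | a_axis] := boolP (openQ4 a).
  have [a0 [_ [a0_cone _ det_a0 _]]] := openQ4_neighbours HF a_ray a_open.
  have a0_neq x : detZ2 x a = 1 -> a0 != x.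
    by move=> dx; apply: (detZ2_neq_l (z := a)); rewrite det_a0 dx.
  have a0_a : a0 != a by apply: unimodular_neq; right.
  have [a0_w a0_b] := (a0_neq w det_wa, a0_neq b det_ba).
  exists [fset a0; a]; split; rewrite ?fset22 //; apply: (mem_neq (fset21 a0 a));
    by rewrite in_fset2 negb_or a0_a.
have a_10 := closedQ4_left_axis a_Q4 (openQ4_closedQ4 w_open) a_axis det_aw.
have [w_q1 _ _] := openQ4_notin_q w_open.
have b_q1 : b \notin q1.
  rewrite in_fset2 negb_or -a_10 eq_sym a_neq_b; apply: contraTneq b_Q4 => ->.
  by rewrite /closedQ4.
exists q1; split; first exact: q1_cone HF.
- by rewrite a_10 fset21.
- by rewrite eq_sym; apply: mem_neq w_q1; rewrite fset22.
- by rewrite eq_sym; apply: mem_neq b_q1; rewrite fset22.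
Qed.

Let old_cone s : s \in cones2 F -> s != A -> s != B -> s \in cones2 (blowdown F a b).
Proof. by move=> sC sA sB; rewrite in_blowdown sA sB sC orbT. Qed.

Let old_cone_w s : s \in cones2 F -> w \notin s -> s \in cones2 (blowdown F a b).
Proof.
move=> sC ws; apply: old_cone => //; apply: contraNneq ws => ->; exact: fset22.
Qed.

Let blowdown_cone_ray s x : s \in cones2 (blowdown F a b) -> x \in s -> x \in rays F `\ w.
Proof.
rewrite in_blowdown in_fsetD1 => /orP[/eqP -> | /and3P[sA sB sC] xs].
  by rewrite in_fset2 => /orP[] /eqP ->; rewrite ?a_ray ?b_ray ?a_neq_w ?b_neq_w.
rewrite (cone_ray HF sC xs) andbT; apply: contraNneq sA => xw.
by move: xs; rewrite xw w_cones // (negbTE sB) orbF.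
Qed.

Let blowdown_two_cones u : u \in rays F `\ w -> two_cones (blowdown F a b) u.
Proof.
rewrite in_fsetD1 => /andP[uw uR].
have [-> | ua] := eqVneq u a.
  exact: blowdown_two_cones_end (ray_two_cones HF a_ray) A_cone a_notin_B blowdown_AB_notin.
have [-> | ub] := eqVneq u b.
  rewrite blowdownC; apply: blowdown_two_cones_end (ray_two_cones HF b_ray) _ _ _.
  - by rewrite addZ2C.
  - by rewrite addZ2C.
  - by rewrite fsetUC; exact: blowdown_AB_notin.
apply: blowdown_two_cones_other (ray_two_cones HF uR) _ _ _ blowdown_AB_notin;
  by rewrite !in_fset2 !negb_or ?ua ?ub ?uw.
Qed.

Let blowdown_neighbours u : u \in rays F `\ w -> openQ4 u -> exists a' b',
  [/\ [fset a'; u] \in cones2 (blowdown F a b), [fset b'; u] \in cones2 (blowdown F a b),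
     detZ2 a' u = -1 & detZ2 u b' = -1].
Proof.
rewrite in_fsetD1 => /andP[uw uR] u_open.
have [a0 [b0 [a0_cone b0_cone det_a0 det_b0]]] := openQ4_neighbours HF uR u_open.
have AB_new : AB \in cones2 (blowdown F a b) by rewrite in_blowdown eqxx.
have [Eu | ua] := eqVneq u a.
  rewrite Eu in a0_cone det_a0 *; exists a0, b; split=> //; last by rewrite fsetUC.
  have a0_A : a0 \notin A.
    rewrite in_fset2 negb_or; apply/andP; split; first by apply: unimodular_neq; right.
    by apply: (detZ2_neq_l (z := a)); rewrite det_a0 det_wa.
  by apply: old_cone; [| apply: mem_neq a0_A | apply: mem_neq a_notin_B]; rewrite ?fset21 ?fset22.
have [Eu | ub] := eqVneq u b.
  rewrite Eu in b0_cone det_b0 *; exists a, b0; split=> //.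
  have b0_B : b0 \notin B.
    rewrite in_fset2 negb_or; apply/andP; split.
      by rewrite eq_sym; apply: unimodular_neq; right.
    by apply: (detZ2_neq_r (z := b)); rewrite det_b0 det_bw.
  by apply: old_cone; [| apply: mem_neq b_notin_A | apply: mem_neq b0_B]; rewrite ?fset21 ?fset22.
have [uA uB] : u \notin A /\ u \notin B by rewrite !in_fset2 !negb_or ua ub uw.
have old_u s : s \in cones2 F -> u \in s -> s \in cones2 (blowdown F a b).
  by move=> sC us; apply: old_cone; [| apply: mem_neq uA | apply: mem_neq uB].
by exists a0, b0; split; rewrite // old_u ?fset22.
Qed.

Lemma blowdown_q4_fan : q4_fan (blowdown F a b).
Proof.
have [w_q1 w_q2 w_q3] := openQ4_notin_q w_open.
split.
- exact: old_cone_w (q1_cone HF) w_q1.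
- exact: old_cone_w (q2_cone HF) w_q2.
- exact: old_cone_w (q3_cone HF) w_q3.
- exact: blowdown_cone_ray.
- move=> s; rewrite in_blowdown => /orP[/eqP -> | /and3P[_ _ sC]]; last exact: (cone_cases HF sC).
  by apply: Or44; exists a, b.
- exact: blowdown_two_cones.
- exact: blowdown_neighbours.
Qed.

Lemma blowdown_rays_lt : (#|` rays (blowdown F a b)| < #|` rays F|)%N.
Proof. by rewrite /= (cardfsD1 w (rays F)) w_ray. Qed.

End Blowdown.

Lemma q4_fan_cones_quadrants (F : fan2) (s : {fset Z2}) : q4_fan F ->
  (forall u, u \in rays F -> ~~ openQ4 u) -> s \in cones2 F -> s \in [fset q1; q2; q3; q4].
Proof.
move=> HF no_open sC; rewrite !inE.
case: (cone_cases HF sC) => [-> | -> | -> | [u [v [Es Qu Qv duv]]]]; rewrite ?eqxx ?orbT //.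
have [uR vR] : u \in rays F /\ v \in rays F.
  by split; apply: (cone_ray HF sC); rewrite Es ?fset21 ?fset22.
rewrite Es (closedQ4_left_axis Qu Qv (no_open u uR) duv).
by rewrite (closedQ4_right_axis Qv Qu (no_open v vR) duv) /q4 eqxx !orbT.
Qed.

Lemma q4_fan_Sigma0 (F : fan2) : q4_fan F ->
  (forall u, u \in rays F -> ~~ openQ4 u) -> F = Sigma0.
Proof.
move=> HF no_open; have cones_q := q4_fan_cones_quadrants HF no_open.
have e1_ray : ((1, 0) : Z2) \in rays F by apply: (cone_ray HF (q1_cone HF)); rewrite fset21.
have q4_cone : q4 \in cones2 F.
  have [t [tC t_q1 e1_in]] := other_cone (ray_two_cones HF e1_ray) (q1_cone HF) (fset21 _ _).
  have e1t : ((1, 0) : Z2) \in t by rewrite e1_in // eqxx orbT.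
  have := cones_q t tC; rewrite !inE -!orbA => /or4P[] /eqP Et; rewrite -?Et //.
  - by rewrite Et eqxx in t_q1.
  - by move: e1t; rewrite Et !inE.
  - by move: e1t; rewrite Et !inE.
have rays_eq : rays F = [fset ((1, 0) : Z2); (0, 1); (-1, 0); (0, -1)].
  apply/fsetP => u; apply/idP/idP => [uR | ].
    have [s [s' [sC _ _ u_in]]] := ray_two_cones HF uR.
    have {u_in} us : u \in s by rewrite u_in ?eqxx.
    move: (cones_q s sC) us; rewrite !inE -!orbA.
    by case/or4P => /eqP ->; rewrite !inE => /orP[] /eqP ->; rewrite eqxx ?orbT.
  rewrite !inE -!orbA => /or4P[] /eqP ->.
  - by apply: (cone_ray HF (q1_cone HF)); rewrite fset21.
  - by apply: (cone_ray HF (q1_cone HF)); rewrite fset22.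
  - by apply: (cone_ray HF (q2_cone HF)); rewrite fset21.
  - by apply: (cone_ray HF (q3_cone HF)); rewrite fset22.
have cones_eq : cones2 F = [fset q1; q2; q3; q4].
  apply/fsetP => s; apply/idP/idP; first exact: cones_q.
  by rewrite !inE -!orbA => /or4P[] /eqP ->; rewrite ?(q1_cone HF) ?(q2_cone HF) ?(q3_cone HF).
by move: rays_eq cones_eq; case: F {HF no_open cones_q e1_ray q4_cone} => rs cs /= -> ->.
Qed.

Lemma exists_arg_max (T : eqType) (P : pred T) (f : T -> int) (s : seq T) : has P s ->
  exists2 x, x \in s & P x /\ forall y, y \in s -> P y -> f y <= f x.
Proof.
elim: s => //= y s IH.
have [/IH [x xs [Px x_max]] _ | /hasPn nPs /orP[Py | //]] := boolP (has P s); last first.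
  exists y; rewrite ?mem_head //; split=> // z; rewrite in_cons => /orP[/eqP -> // | zs].
  by rewrite (negbTE (nPs z zs)).
have [Py | nPy] := boolP (P y); last first.
  exists x; rewrite ?in_cons ?xs ?orbT //; split=> // z.
  by rewrite in_cons => /orP[/eqP -> | /x_max //]; rewrite (negbTE nPy).
have [le_yx | lt_xy] := lerP (f y) (f x).
  exists x; rewrite ?in_cons ?xs ?orbT //; split=> // z.
  by rewrite in_cons => /orP[/eqP -> | /x_max //].
exists y; rewrite ?mem_head //; split=> // z.
by rewrite in_cons => /orP[/eqP -> // | /x_max zx /zx /le_trans]; apply; apply: ltW.
Qed.

Lemma q4_fan_max_split (F : fan2) (w : Z2) : q4_fan F -> w \in rays F -> openQ4 w ->
  (forall u, u \in rays F -> openQ4 u -> weight u <= weight w) ->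
  exists a b, [/\ w = addZ2 a b, detZ2 a b = -1,
                  [fset a; w] \in cones2 F & [fset b; w] \in cones2 F].
Proof.
move=> HF wR w_open w_max.
have [a [b [aC bC daw dwb]]] := openQ4_neighbours HF wR w_open.
have Qa := q4_fan_closedQ4 HF aC w_open (fset22 a w) (fset21 a w).
have Qb := q4_fan_closedQ4 HF bC w_open (fset22 b w) (fset21 b w).
have Qw := openQ4_closedQ4 w_open.
have w_ge1 : 1 <= weight w by move: w_open; rewrite /openQ4 /weight => /andP[]; lia.
have aR : a \in rays F by apply: (cone_ray HF aC); rewrite fset21.
have bR : b \in rays F by apply: (cone_ray HF bC); rewrite fset21.
have la : weight a <= weight w.
  have [/(w_max a aR) // | a_axis] := boolP (openQ4 a).
  by rewrite (closedQ4_left_axis Qa Qw a_axis daw).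
have lb : weight b <= weight w.
  have [/(w_max b bR) // | b_axis] := boolP (openQ4 b).
  by rewrite (closedQ4_right_axis Qb Qw b_axis dwb).
have Ew := neighbours_sum Qa Qb w_open daw dwb la lb.
by exists a, b; split=> //; rewrite -daw -Ew /detZ2 /=; ring.
Qed.

Lemma q4_fan_obtained (F : fan2) : q4_fan F -> obtained_by_subdivisions Sigma0 F.
Proof.
have [n] := ubnP #|` rays F|; elim: n F => // n IHn F lt_n HF.
have [some_open | /hasPn no_open] := boolP (has openQ4 (rays F)); last first.
  by rewrite (q4_fan_Sigma0 HF no_open); exact: obs_refl.
have [w wR [w_open w_max]] := exists_arg_max weight some_open.
have [a [b [Ew dab aC bC]]] := q4_fan_max_split HF wR w_open w_max.
rewrite {}Ew in wR w_open aC bC {w_max}.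
rewrite -(subdiv_blowdown wR aC bC (blowdown_AB_notin HF w_open aC bC dab)).
apply: obs_step.
- apply: IHn (blowdown_q4_fan HF w_open aC bC dab).
  by apply: leq_trans (blowdown_rays_lt HF aC) _; rewrite -ltnS.
- by apply: unimodular_neq; right.
- by rewrite in_blowdown eqxx.
Qed.

Theorem proposition2p10 (R : realType) (F : fan2) :
  in_cFan_pm_sc R F -> obtained_by_subdivisions Sigma0 F.
Proof. by move=> HF; apply: q4_fan_obtained; exact: cFan_q4_fan HF. Qed.
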